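(* Let $\lambda>0$, $\omega_0\ne0$ with $\omega_0^2/(2\lambda)<2$, $e=1-\omega_0^2/(2\lambda)$, and let $\tilde{\mathbf r}_\lambda(t,\omega_0)$ be the trajectory defined in the context. Then for every $t\ge0$, with $\varphi=\varphi(t)$ and $f(\varphi),T(\varphi),b(\varphi)$ the cohesion, kinetic energy and root-mean-square size of the system at time $t$, $$f(\varphi)=\frac{C(\mathbf m)}{b(\varphi)\sqrt{\sum_jm_j}},\qquad T(\varphi)=\frac{C(\mathbf m)}{2b(\varphi)\sqrt{\sum_jm_j}}\cdot\frac{1+e^2-2e\cos\varphi}{1-e\cos\varphi}.$$
   Context: Fix $N\ge2$, masses $\mathbf m=(m_1,\dots,m_N)$, $m_i>0$, $\gamma>0$. Planar configuration space $\mathfrak R=\{\mathbf r=(\mathbf r_1,\dots,\mathbf r_N)\in(\mathbb R^2)^N:\ \mathbf r_i\neq\mathbf r_j \text{ for } i\neq j\}$; cohesion $f(\mathbf r)=\sum_{i<j}\frac{\gamma m_im_j}{|\mathbf r_j-\mathbf r_i|}$; $g(\mathbf r)=\sum_i m_i|\mathbf r_i|^2$; root-mean-square size $b(\mathbf r)=\sqrt{g(\mathbf r)/\sum_jm_j}$; kinetic energy $T=\frac12\sum_j m_j|\dot{\mathbf r}_j|^2$; $C(\mathbf m)=\min\{f(\mathbf r):\mathbf r\in\mathfrak R,\ g(\mathbf r)=1\}$. Let $\mathbf r_\lambda=(\mathbf r_{1\lambda},\dots,\mathbf r_{N\lambda})$ be a global minimizer of $f+\lambda g$ on $\mathfrak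 R$; identify $\mathbb R^2$ with $\mathbb C$, $z_{j\lambda}\leftrightarrow\mathbf r_{j\lambda}$. Put $a(\varphi)=(1-e)/(1-e\cos\varphi)$ and define $\varphi(t)$ by $\omega_0t=\int_0^{\varphi(t)}\frac{(1-e)^2\,d\alpha}{(1-e\cos\alpha)^2}$. The trajectory $\tilde{\mathbf r}_\lambda(t,\omega_0)$ has $j$-th particle at complex position $z_{j\lambda}a(\varphi(t))e^{i\varphi(t)}$; it solves the planar Newtonian $N$-body equations $m_j\ddot{\mathbf r}_j=\sum_{k\ne j}\gamma m_jm_k(\mathbf r_k-\mathbf r_j)/|\mathbf r_k-\mathbf r_j|^3$. *)

From Stdlib Require Import Reals Lra List.
From Coquelicot Require Import Coquelicot.
Import ListNotations.
Open Scope R_scope.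

(* Particles are indexed by 0 .. N-1; a configuration is a map nat -> C
   whose values at indices >= N are irrelevant. *)
Definition sumN (N : nat) (F : nat -> R) : R :=
  fold_right Rplus 0 (map F (seq 0 N)).

Definition config (N : nat) (r : nat -> C) : Prop :=
  forall i j, (i < N)%nat -> (j < N)%nat -> i <> j -> r i <> r j.

Definition cohesion (N : nat) (m : nat -> R) (gam : R) (r : nat -> C) : R :=
  sumN N (fun i => sumN N (fun j =>
    if Nat.ltb i j then gam * m i * m j / Cmod (Cminus (r j) (r i)) else 0)).

Definition gmom (N : nat) (m : nat -> R) (r : nat -> C) : R :=
  sumN N (fun i => m i * (Cmod (r i)) ^ 2).

Definition mass (N : nat) (m : nat -> R) : R := sumN N m.

Definition rms (N : nat) (m : nat -> R) (r : nat -> C) : R :=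
  sqrt (gmom N m r / mass N m).

(* C(m) = min { f(r) : r in config space, g(r) = 1 } (taken as the infimum,
   which is the minimum when attained). *)
Definition Cmin (N : nat) (m : nat -> R) (gam : R) : R :=
  real (Glb_Rbar (fun y => exists r, config N r /\ gmom N m r = 1 /\ y = cohesion N m gam r)).

Definition kinetic (N : nat) (m : nat -> R) (q : R -> nat -> C) (t : R) : R :=
  / 2 * sumN N (fun j => m j *
     ((Derive (fun s => fst (q s j)) t) ^ 2 + (Derive (fun s => snd (q s j)) t) ^ 2)).

Definition aecc (e ph : R) : R := (1 - e) / (1 - e * cos ph).

Definition traj (e : R) (z : nat -> C) (phi : R -> R) (t : R) (j : nat) : C :=
  Cmult (z j) (aecc e (phi t) * cos (phi t), aecc e (phi t) * sin (phi t)).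

(* Scaling a minimizer [rl] of f + lam g by s > 0 shows that s = 1 minimizes
   F / s + lam G s^2 (F, G the cohesion and moment of inertia of [rl]), whence the
   virial identity F = 2 lam G; scaling any configuration with g = 1 by sqrt G
   then identifies C(m) = F sqrt G.  The trajectory at time t is [rl] multiplied
   by the complex number a(phi) e^{i phi}, so cohesion, size and kinetic energy
   scale by 1 / a, a and |d/dt (a e^{i phi})|^2.  The inverse function rule
   applied to the defining integral gives phi' = om0 (1 - e cos phi)^2 / (1 - e)^2.
   Substituting om0^2 = 2 lam (1 - e) gives both formulas. *)

From Stdlib Require Import Reals Lra Lia List.
From Coquelicot Require Import Coquelicot.
Open Scope R_scope.

Lemma sumN_ext N F G :
  (forall i, (i < N)%nat -> F i = G i) -> sumN N F = sumN N G.
Proof.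
  intros HFG. unfold sumN. f_equal. apply map_ext_in.
  intros i Hi. apply in_seq in Hi. apply HFG. lia.
Qed.

Lemma sumN_scal N k F : sumN N (fun i => k * F i) = k * sumN N F.
Proof.
  unfold sumN. induction (seq 0 N) as [|i l IH]; simpl.
  - ring.
  - rewrite IH. ring.
Qed.

Lemma sum_map_nonneg (l : list nat) F :
  (forall j, In j l -> 0 <= F j) -> 0 <= fold_right Rplus 0 (map F l).
Proof.
  induction l as [|k l IH]; simpl; intros Hnn; [lra|].
  assert (0 <= F k) by auto. assert (0 <= fold_right Rplus 0 (map F l)) by auto. lra.
Qed.

Lemma sum_map_pos (l : list nat) F i :
  (forall j, In j l -> 0 <= F j) -> In i l -> 0 < F i -> 0 < fold_right Rplus 0 (map F l).
Proof.
  induction l as [|k l IH]; simpl; intros Hnn Hi HFi; [contradiction|].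
  assert (0 <= F k) by auto.
  assert (0 <= fold_right Rplus 0 (map F l)) by (apply sum_map_nonneg; auto).
  destruct Hi as [<- | Hi]; [lra|].
  assert (0 < fold_right Rplus 0 (map F l)) by auto. lra.
Qed.

Lemma sumN_pos N F i :
  (forall j, (j < N)%nat -> 0 <= F j) -> (i < N)%nat -> 0 < F i -> 0 < sumN N F.
Proof.
  intros Hnn Hi HFi. apply (sum_map_pos _ _ i); [|apply in_seq; lia | exact HFi].
  intros j Hj. apply in_seq in Hj. apply Hnn. lia.
Qed.

Definition scale (r : nat -> C) (u : C) : nat -> C := fun i => Cmult (r i) u.

Lemma Cminus_mult_r (a b u : C) : Cminus (Cmult a u) (Cmult b u) = Cmult (Cminus a b) u.
Proof. destruct a, b, u. unfold Cminus, Cmult, Cplus, Copp; simpl. f_equal; ring. Qed.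

Lemma cohesion_scale N m gam r u :
  cohesion N m gam (scale r u) = / Cmod u * cohesion N m gam r.
Proof.
  unfold cohesion. rewrite <- sumN_scal. apply sumN_ext. intros i _.
  rewrite <- sumN_scal. apply sumN_ext. intros j _.
  destruct (Nat.ltb i j); [|ring].
  unfold scale. rewrite Cminus_mult_r, Cmod_mult. unfold Rdiv. rewrite Rinv_mult. ring.
Qed.

Lemma gmom_scale N m r u : gmom N m (scale r u) = Cmod u ^ 2 * gmom N m r.
Proof.
  unfold gmom. rewrite <- sumN_scal. apply sumN_ext. intros i _.
  unfold scale. rewrite Cmod_mult. ring.
Qed.

Lemma config_scale N r (u : C) : u <> 0%C -> config N r -> config N (scale r u).
Proof.
  intros Hu Hr i j Hi Hj Hij Heq. apply (Hr i j Hi Hj Hij).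
  unfold scale in Heq.
  rewrite <- (Cmult_1_r (r i)), <- (Cmult_1_r (r j)), <- (Cinv_r u Hu), !Cmult_assoc, Heq.
  reflexivity.
Qed.

Lemma Cmod_RtoC_pos s : 0 <= s -> Cmod (RtoC s) = s.
Proof. intros Hs. rewrite Cmod_R. apply Rabs_pos_eq, Hs. Qed.

(* [s = 1] is an interior minimum of [s |-> A / s + B s^2], so its derivative
   [2 B - A] vanishes there. *)
Lemma scaling_balance A B :
  (forall s, 0 < s -> A + B <= / s * A + B * s ^ 2) -> A = 2 * B.
Proof.
  intros Hmin.
  set (f := fun s => / s * A + B * s ^ 2).
  assert (Hd : is_derive f 1 (2 * B - A)) by (unfold f; auto_derive; [lra | field]).
  assert (Hcrit := deriv_minimum f 0 2 1 (ex_derive_Reals_0 f 1 (ex_intro _ _ Hd))).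
  rewrite Derive_Reals, (is_derive_unique _ _ _ Hd) in Hcrit.
  assert (2 * B - A = 0); [|lra].
  apply Hcrit; [lra | lra |]. intros s Hs _. unfold f.
  replace (/ 1 * A + B * 1 ^ 2) with (A + B) by field. apply Hmin, Hs.
Qed.

Lemma RtoC_neq_0 s : 0 < s -> RtoC s <> 0%C.
Proof. intros Hs. apply Cmod_gt_0. rewrite Cmod_RtoC_pos; lra. Qed.

Lemma gmom_pos N m r :
  (2 <= N)%nat -> (forall i, (i < N)%nat -> 0 < m i) -> config N r -> 0 < gmom N m r.
Proof.
  intros HN Hm Hr.
  assert (Hex : exists i, (i < N)%nat /\ 0 < Cmod (r i)).
  { destruct (Req_dec (Cmod (r 0%nat)) 0) as [H0 | H0].
    - exists 1%nat. split; [lia|]. apply Cmod_gt_0. intros H1.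
      apply (Hr 0%nat 1%nat); [lia | lia | lia |].
      rewrite (Cmod_eq_0 _ H0), H1. reflexivity.
    - exists 0%nat. split; [lia|]. pose proof (Cmod_ge_0 (r 0%nat)). lra. }
  destruct Hex as [i [Hi Hri]].
  apply (sumN_pos _ _ i); [| exact Hi |].
  - intros j Hj. apply Rmult_le_pos; [apply Rlt_le, Hm, Hj | apply pow2_ge_0].
  - apply Rmult_lt_0_compat; [apply Hm, Hi | apply pow_lt, Hri].
Qed.

Section Minimizer.

Variables (N : nat) (m : nat -> R) (gam lam : R) (rl : nat -> C).
Hypothesis Hrl : config N rl.
Hypothesis Hmin : forall r, config N r ->
  cohesion N m gam rl + lam * gmom N m rl <= cohesion N m gam r + lam * gmom N m r.

Lemma minimizer_virial : cohesion N m gam rl = 2 * lam * gmom N m rl.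
Proof.
  rewrite Rmult_assoc. apply scaling_balance. intros s Hs.
  assert (Hs' := Hmin _ (config_scale N rl s (RtoC_neq_0 s Hs) Hrl)).
  rewrite cohesion_scale, gmom_scale, Cmod_RtoC_pos in Hs' by lra. lra.
Qed.

Hypothesis Hgmom : 0 < gmom N m rl.

Lemma Cmin_minimizer : Cmin N m gam = cohesion N m gam rl * sqrt (gmom N m rl).
Proof.
  set (F := cohesion N m gam rl). set (G := gmom N m rl).
  assert (HG : 0 < G) by exact Hgmom.
  assert (HsG : 0 < sqrt G) by (apply sqrt_lt_R0, HG).
  assert (HsG' : 0 < / sqrt G) by (apply Rinv_0_lt_compat, HsG).
  unfold Cmin. rewrite (is_glb_Rbar_unique _ (F * sqrt G)); [reflexivity | split].
  - intros y [r [Hr [Hr1 ->]]]. simpl.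
    assert (Hs := Hmin _ (config_scale N r (sqrt G) (RtoC_neq_0 _ HsG) Hr)).
    rewrite cohesion_scale, gmom_scale, Cmod_RtoC_pos, Hr1, pow2_sqrt in Hs by lra.
    fold F G in Hs.
    replace (cohesion N m gam r) with (sqrt G * (/ sqrt G * cohesion N m gam r))
      by (field; lra).
    rewrite Rmult_comm. apply Rmult_le_compat_l; lra.
  - intros b Hb. apply Hb. exists (scale rl (/ sqrt G)%R). split; [|split].
    + apply config_scale; [apply RtoC_neq_0 |]; assumption.
    + rewrite gmom_scale, Cmod_RtoC_pos, pow_inv, pow2_sqrt by lra. fold G. field. lra.
    + rewrite cohesion_scale, Cmod_RtoC_pos, Rinv_inv by lra. fold F. ring.
Qed.

End Minimizer.

Lemma continuity_pt_lipschitz (f : R -> R) x k :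
  (forall y, Rabs (f y - f x) <= k * Rabs (y - x)) -> continuity_pt f x.
Proof.
  intros Hf. apply continuity_pt_locally. intros eps.
  assert (Hk : 0 < Rabs k + 1) by (pose proof (Rabs_pos k); lra).
  assert (Hd : 0 < eps / (Rabs k + 1)) by (apply Rdiv_lt_0_compat; [apply cond_pos | exact Hk]).
  exists (mkposreal _ Hd). intros y Hy. change (Rabs (y - x) < eps / (Rabs k + 1)) in Hy.
  apply Rle_lt_trans with (Rabs k * Rabs (y - x)).
  - eapply Rle_trans; [apply Hf |]. apply Rmult_le_compat_r; [apply Rabs_pos | apply Rle_abs].
  - apply Rle_lt_trans with ((Rabs k + 1) * Rabs (y - x)); [pose proof (Rabs_pos (y - x)); nra |].
    apply Rmult_lt_reg_r with (/ (Rabs k + 1)); [apply Rinv_0_lt_compat, Hk |].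
    replace ((Rabs k + 1) * Rabs (y - x) * / (Rabs k + 1)) with (Rabs (y - x)) by (field; lra).
    exact Hy.
Qed.

Lemma Rabs_diff_ge_of_derive_ge (H h : R -> R) c :
  (forall x, is_derive H x (h x)) -> (forall x, c <= h x) ->
  forall x y, c * Rabs (y - x) <= Rabs (H y - H x).
Proof.
  intros HD Hh x y.
  destruct (MVT_gen H x y h) as [xi [_ Hxi]].
  - intros z _. apply HD.
  - intros z _. apply continuity_pt_filterlim, (ex_derive_continuous H).
    exists (h z). apply HD.
  - rewrite Hxi, Rabs_mult. apply Rmult_le_compat_r; [apply Rabs_pos |].
    eapply Rle_trans; [apply Hh | apply Rle_abs].
Qed.

Definition slope (H : R -> R) (x0 l y : R) : R :=
  if Req_EM_T y x0 then l else (H y - H x0) / (y - x0).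

Lemma slope_continuity_pt H x0 l :
  derivable_pt_lim H x0 l -> continuity_pt (slope H x0 l) x0.
Proof.
  intros HD. apply continuity_pt_locally. intros eps.
  destruct (HD eps (cond_pos eps)) as [d Hd]. exists d. intros y Hy.
  change (Rabs (y - x0) < d) in Hy.
  unfold slope. destruct (Req_EM_T x0 x0) as [_ | Hx0]; [| congruence].
  destruct (Req_EM_T y x0) as [-> | Hne].
  - rewrite Rminus_eq_0, Rabs_R0. apply cond_pos.
  - replace y with (x0 + (y - x0)) at 1 by ring. apply Hd; [lra | exact Hy].
Qed.

Section InverseFunction.

Variables (H h phi : R -> R) (w c : R).
Hypothesis Hc : 0 < c.
Hypothesis HD : forall x, is_derive H x (h x).
Hypothesis Hh : forall x, c <= h x.
Hypothesis Hphi : forall t, H (phi t) = w * t.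

Lemma inverse_lipschitz s t : c * Rabs (phi s - phi t) <= Rabs w * Rabs (s - t).
Proof.
  rewrite <- Rabs_mult.
  replace (w * (s - t)) with (H (phi s) - H (phi t)) by (rewrite !Hphi; ring).
  apply (Rabs_diff_ge_of_derive_ge H h); assumption.
Qed.

Lemma inverse_continuity_pt t : continuity_pt phi t.
Proof.
  apply continuity_pt_lipschitz with (Rabs w / c). intros s.
  apply Rmult_le_reg_l with c; [exact Hc |].
  replace (c * (Rabs w / c * Rabs (s - t))) with (Rabs w * Rabs (s - t)) by (field; lra).
  apply inverse_lipschitz.
Qed.

Lemma inverse_diff_quotient t s : s <> 0 ->
  (phi (t + s) - phi t) / s = w / slope H (phi t) (h (phi t)) (phi (t + s)).
Proof.
  intros Hs. unfold slope. destruct (Req_EM_T (phi (t + s)) (phi t)) as [Heq | Hne].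
  - assert (Hw : w = 0).
    { apply Rmult_eq_reg_r with s; [| exact Hs].
      replace (w * s) with (H (phi (t + s)) - H (phi t)) by (rewrite !Hphi; ring).
      rewrite Heq. ring. }
    rewrite Heq, Hw. pose proof (Hh (phi t)). field. split; [lra | exact Hs].
  - assert (Hd : phi (t + s) - phi t <> 0) by (intros Hd; apply Hne; lra).
    assert (Hw : w <> 0).
    { intros Hw. apply Hd, Rabs_eq_0.
      pose proof (inverse_lipschitz (t + s) t) as Hlip. rewrite Hw, Rabs_R0 in Hlip.
      pose proof (Rabs_pos (phi (t + s) - phi t)). nra. }
    rewrite !Hphi. replace (w * (t + s) - w * t) with (w * s) by ring.
    field. repeat split; assumption.
Qed.

Lemma is_derive_inverse t : is_derive phi t (w / h (phi t)).
Proof.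
  set (Q := slope H (phi t) (h (phi t))).
  assert (HQ : Q (phi t) = h (phi t)).
  { unfold Q, slope. destruct (Req_EM_T (phi t) (phi t)); congruence. }
  assert (HQcont : continuity_pt (fun s => w / Q (phi s)) t).
  { apply (continuity_pt_div (fct_cte w) (comp Q phi)).
    - apply continuity_pt_const. intros a b. reflexivity.
    - apply continuity_pt_comp; [apply inverse_continuity_pt |].
      apply slope_continuity_pt, is_derive_Reals, HD.
    - unfold comp. rewrite HQ. pose proof (Hh (phi t)). lra. }
  apply is_derive_Reals. intros eps Heps.
  destruct (proj1 (continuity_pt_locally _ t) HQcont (mkposreal eps Heps)) as [d Hd].
  exists d. intros s Hs0 Hs. rewrite inverse_diff_quotient by exact Hs0. fold Q. rewrite <- HQ.
  apply Hd.
  change (Rabs (t + s - t) < d). replace (t + s - t) with s by ring. exact Hs.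
Qed.

End InverseFunction.

Lemma kinetic_scale N m r (u : R -> C) t a b :
  is_derive (fun s => fst (u s)) t a -> is_derive (fun s => snd (u s)) t b ->
  kinetic N m (fun s => scale r (u s)) t = / 2 * (a ^ 2 + b ^ 2) * gmom N m r.
Proof.
  intros Ha Hb. unfold kinetic, gmom. rewrite Rmult_assoc. f_equal. rewrite <- sumN_scal.
  apply sumN_ext. intros j _. unfold scale, Cmult; cbn [fst snd].
  rewrite (is_derive_unique _ t (fst (r j) * a - snd (r j) * b)),
    (is_derive_unique _ t (fst (r j) * b + snd (r j) * a)).
  - rewrite Cmod2_alt. unfold Re, Im. ring.
  - apply (is_derive_plus (fun s => fst (r j) * snd (u s)) (fun s => snd (r j) * fst (u s)));
      apply is_derive_scal; assumption.
  - apply (is_derive_minus (fun s => fst (r j) * fst (u s)) (fun s => snd (r j) * snd (u s)));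
      apply is_derive_scal; assumption.
Qed.

Lemma rms_mul_sqrt_mass N m r :
  0 < mass N m -> 0 <= gmom N m r -> rms N m r * sqrt (mass N m) = sqrt (gmom N m r).
Proof.
  intros HM HG. unfold rms. rewrite <- sqrt_mult_alt by (apply Rdiv_le_0_compat; lra).
  f_equal. field. lra.
Qed.

Lemma sin_sq x : sin x ^ 2 = 1 - cos x ^ 2.
Proof. rewrite <- (sin2_cos2 x). unfold Rsqr. ring. Qed.

Definition kepler_orbit (e x : R) : C := (aecc e x * cos x, aecc e x * sin x).

Definition anomaly_weight (e a : R) : R := (1 - e) ^ 2 / (1 - e * cos a) ^ 2.

Section KeplerOrbit.

Variable e : R.
Hypothesis He : -1 < e < 1.

Lemma ecc_denom_bounds x : 0 < 1 - e * cos x < 2.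
Proof. pose proof (COS_bound x). destruct (Rle_dec 0 e); split; nra. Qed.

Lemma aecc_pos x : 0 < aecc e x.
Proof. unfold aecc. apply Rdiv_lt_0_compat; [lra | apply ecc_denom_bounds]. Qed.

Lemma Cmod_kepler_orbit x : Cmod (kepler_orbit e x) = aecc e x.
Proof.
  unfold Cmod, kepler_orbit. cbn [fst snd].
  replace ((aecc e x * cos x) ^ 2 + (aecc e x * sin x) ^ 2) with (aecc e x ^ 2)
    by (rewrite !Rpow_mult_distr, sin_sq; ring).
  apply sqrt_pow2, Rlt_le, aecc_pos.
Qed.

Lemma is_derive_kepler_orbit_fst x :
  is_derive (fun y => fst (kepler_orbit e y)) x (- (1 - e) * sin x / (1 - e * cos x) ^ 2).
Proof.
  destruct (ecc_denom_bounds x). unfold kepler_orbit, aecc. cbn [fst].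
  auto_derive; [lra | field; lra].
Qed.

Lemma is_derive_kepler_orbit_snd x :
  is_derive (fun y => snd (kepler_orbit e y)) x ((1 - e) * (cos x - e) / (1 - e * cos x) ^ 2).
Proof.
  destruct (ecc_denom_bounds x). unfold kepler_orbit, aecc. cbn [snd].
  auto_derive; [lra |]. field_simplify_eq; [| lra]. rewrite !sin_sq. ring.
Qed.

Lemma kinetic_traj N m rl phi t dphi :
  is_derive phi t dphi ->
  kinetic N m (traj e rl phi) t
    = / 2 * (dphi ^ 2 * ((1 - e) ^ 2 * (1 + e ^ 2 - 2 * e * cos (phi t))
                         / (1 - e * cos (phi t)) ^ 4)) * gmom N m rl.
Proof.
  intros Hphi. destruct (ecc_denom_bounds (phi t)).
  change (traj e rl phi) with (fun s => scale rl (kepler_orbit e (phi s))).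
  rewrite (kinetic_scale N m rl _ t
    (dphi * (- (1 - e) * sin (phi t) / (1 - e * cos (phi t)) ^ 2))
    (dphi * ((1 - e) * (cos (phi t) - e) / (1 - e * cos (phi t)) ^ 2))).
  - f_equal. f_equal. field_simplify_eq; [| lra]. rewrite !sin_sq. ring.
  - apply (is_derive_comp (fun y => fst (kepler_orbit e y)) phi t);
      [apply is_derive_kepler_orbit_fst | exact Hphi].
  - apply (is_derive_comp (fun y => snd (kepler_orbit e y)) phi t);
      [apply is_derive_kepler_orbit_snd | exact Hphi].
Qed.

Lemma anomaly_is_derive (w : R) (phi : R -> R) :
  (forall t, w * t = RInt (anomaly_weight e) 0 (phi t)) ->
  forall t, is_derive phi t (w / anomaly_weight e (phi t)).
Proof.
  intros Hphi.
  assert (Hcont : forall x, continuous (anomaly_weight e) x).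
  { intros x. destruct (ecc_denom_bounds x). apply (ex_derive_continuous (anomaly_weight e)).
    unfold anomaly_weight. auto_derive. nra. }
  apply (is_derive_inverse (RInt (anomaly_weight e) 0) _ phi w ((1 - e) ^ 2 / 4)).
  - apply Rdiv_lt_0_compat; [apply pow_lt |]; lra.
  - intros x. apply (is_derive_RInt (anomaly_weight e) _ 0); [| apply Hcont].
    apply filter_forall. intros y. apply (RInt_correct (anomaly_weight e)), ex_RInt_continuous.
    intros z _. apply Hcont.
  - intros x. destruct (ecc_denom_bounds x). unfold anomaly_weight.
    apply Rmult_le_compat_l; [apply pow2_ge_0 |].
    apply Rinv_le_contravar; [apply pow_lt; lra | nra].
  - intros t. symmetry. apply Hphi.
Qed.

Lemma cohesion_traj N m gam rl phi t :
  cohesion N m gam (traj e rl phi t) = / aecc e (phi t) * cohesion N m gam rl.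
Proof.
  change (traj e rl phi t) with (scale rl (kepler_orbit e (phi t))).
  rewrite cohesion_scale, Cmod_kepler_orbit. reflexivity.
Qed.

Lemma rms_traj N m rl phi t :
  0 < mass N m -> 0 <= gmom N m rl ->
  rms N m (traj e rl phi t) * sqrt (mass N m) = aecc e (phi t) * sqrt (gmom N m rl).
Proof.
  intros HM HG. pose proof (aecc_pos (phi t)).
  change (traj e rl phi t) with (scale rl (kepler_orbit e (phi t))).
  assert (Hg : gmom N m (scale rl (kepler_orbit e (phi t)))
                = aecc e (phi t) ^ 2 * gmom N m rl)
    by (rewrite gmom_scale, Cmod_kepler_orbit; reflexivity).
  rewrite rms_mul_sqrt_mass, Hg;
    [| exact HM | rewrite Hg; apply Rmult_le_pos; [apply pow2_ge_0 | exact HG]].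
  rewrite sqrt_mult_alt, sqrt_pow2 by (apply pow2_ge_0 || lra). reflexivity.
Qed.

End KeplerOrbit.

Theorem theorem8p3 (N : nat) (m : nat -> R) (gam lam om0 : R)
  (rl : nat -> C) (phi : R -> R) :
  (2 <= N)%nat ->
  (forall i, (i < N)%nat -> 0 < m i) ->
  0 < gam -> 0 < lam -> om0 <> 0 -> om0 ^ 2 / (2 * lam) < 2 ->
  (* rl is a global minimizer of f + lam g on the configuration space *)
  config N rl ->
  (forall r, config N r ->
     cohesion N m gam rl + lam * gmom N m rl <= cohesion N m gam r + lam * gmom N m r) ->
  let e := 1 - om0 ^ 2 / (2 * lam) in
  (* phi is defined by om0 t = int_0^{phi t} (1-e)^2/(1 - e cos a)^2 da *)
  (forall t, om0 * t = RInt (fun a => (1 - e) ^ 2 / (1 - e * cos a) ^ 2) 0 (phi t)) ->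
  forall t, 0 <= t ->
    cohesion N m gam (traj e rl phi t)
      = Cmin N m gam / (rms N m (traj e rl phi t) * sqrt (mass N m)) /\
    kinetic N m (traj e rl phi) t
      = Cmin N m gam / (2 * rms N m (traj e rl phi t) * sqrt (mass N m))
        * ((1 + e ^ 2 - 2 * e * cos (phi t)) / (1 - e * cos (phi t))).
Proof.
  intros HN Hm _ Hlam Hom Hq Hrl Hmin e Hphi t _.
  assert (Hom2 : om0 ^ 2 = 2 * lam * (1 - e)) by (unfold e; field; lra).
  assert (He : -1 < e < 1).
  { assert (0 < om0 ^ 2 / (2 * lam)) by (apply Rdiv_lt_0_compat; [apply pow2_gt_0 |]; lra).
    unfold e. lra. }
  assert (HG := gmom_pos N m rl HN Hm Hrl).
  assert (HM : 0 < mass N m).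
  { apply (sumN_pos _ _ 0); [intros j Hj; apply Rlt_le, Hm, Hj | lia | apply Hm; lia]. }
  assert (Hrms := rms_traj e He N m rl phi t HM (Rlt_le _ _ HG)).
  assert (Hdphi := anomaly_is_derive e He om0 phi Hphi t).
  assert (Ha := aecc_pos e He (phi t)). assert (HD := ecc_denom_bounds e He (phi t)).
  assert (HsG : 0 < sqrt (gmom N m rl)) by (apply sqrt_lt_R0, HG).
  rewrite (Cmin_minimizer N m gam lam rl Hrl Hmin HG).
  split.
  - rewrite cohesion_traj, Hrms by exact He. field. lra.
  - rewrite Rmult_assoc, Hrms, (kinetic_traj e He N m rl phi t _ Hdphi),
      (minimizer_virial N m gam lam rl Hrl Hmin).
    unfold anomaly_weight, aecc. field_simplify; [| lra ..]. rewrite !Hom2. field. split; nra.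
Qed.
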